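(* Consider the classical spin triangle with Heisenberg Hamiltonian $H(\mathbf{s})=J_1\,\mathbf{s}_2\cdot\mathbf{s}_3+J_2\,\mathbf{s}_3\cdot\mathbf{s}_1+J_3\,\mathbf{s}_1\cdot\mathbf{s}_2$ with unit spin vectors $\mathbf{s}_1,\mathbf{s}_2,\mathbf{s}_3$, and write the Gram matrix of a spin configuration as $G=\begin{pmatrix}1&u&v\\ u&1&w\\ v&w&1\end{pmatrix}$, i.e. $u=\mathbf{s}_1\cdot\mathbf{s}_2$, $v=\mathbf{s}_1\cdot\mathbf{s}_3$, $w=\mathbf{s}_2\cdot\mathbf{s}_3$, so that $H=J_1 w+J_2 v+J_3 u$ and $\det G=1+2uvw-(u^2+v^2+w^2)$. Let $\mathbf{J}=(J_1,J_2,J_3)$ and let $\mathbf{E}_0=(1,1,1)$, $\mathbf{E}_1=(1,-1,-1)$, $\mathbf{E}_2=(-1,1,-1)$, $\mathbf{E}_3=(-1,-1,1)$ be the coordinate vectors $(w,v,u)$ of the four Ising Gram matrices. If $\mathbf{J}$ satisfies none of the four conditions $\mathbf{J}\cdot\mathbf{E}_i\le-\|\mathbf{J}\|$ ($i=0,1,2,3$), then the ground states are co-planar, with $\det G=0$ and $-1<u,v,w<1$, and $\mathbf{J}$ is proportional to the gradient of $\mathcal{D}=\det G$: $J_1=2\mu(uv-w)$, $J_2=2\mu(wu-v)$, $J_3=2\mu(vw-u)$. Solving these together with $\mathcal{D}=0$ gives $$u=\frac{J_1}{2J_2}\Big(\frac{J_2^2}{J_3^2}-1\Big)-\frac{J_2}{2J_1},\quad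 v=\frac{J_1}{2J_3}\Big(\frac{J_3^2}{J_2^2}-1\Big)-\frac{J_3}{2J_1},\quad w=\frac{J_2}{2J_3}\Big(\frac{J_3^2}{J_1^2}-1\Big)-\frac{J_3}{2J_2},$$ $$\mu=\frac{-2J_1^3J_2^3J_3^3}{J_1^4(J_2^2-J_3^2)^2-2J_1^2J_2^2J_3^2(J_2^2+J_3^2)+J_2^4J_3^4},$$ and the ground state energy is $E_{min}=J_1w+J_2v+J_3u$.
   Context: Classical spin triangle ($N=3$); Gram set $\mathcal{G}=\{G\ge 0,\ G_{\mu\mu}=1\}$ parametrized by $(u,v,w)$; ground states correspond to boundary points of $\mathcal{G}$ where the affine functional $(u,v,w)\mapsto J_1w+J_2v+J_3u$ is minimal. *)

From Stdlib Require Import Reals.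
Open Scope R_scope.

Definition vec3 : Type := (R * R * R)%type.

Definition dot (a b : vec3) : R :=
  let '(a1, a2, a3) := a in let '(b1, b2, b3) := b in a1 * b1 + a2 * b2 + a3 * b3.

Definition vnorm (a : vec3) : R := sqrt (dot a a).

Definition unit_vec (s : vec3) : Prop := dot s s = 1.

Definition energy (J : vec3) (s1 s2 s3 : vec3) : R :=
  let '(J1, J2, J3) := J in J1 * dot s2 s3 + J2 * dot s3 s1 + J3 * dot s1 s2.

Definition ground_state (J : vec3) (s1 s2 s3 : vec3) : Prop :=
  unit_vec s1 /\ unit_vec s2 /\ unit_vec s3 /\
  forall t1 t2 t3 : vec3, unit_vec t1 -> unit_vec t2 -> unit_vec t3 ->
    energy J s1 s2 s3 <= energy J t1 t2 t3.

Definition coplanar (s1 s2 s3 : vec3) : Prop :=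
  exists n : vec3, n <> (0, 0, 0) /\ dot n s1 = 0 /\ dot n s2 = 0 /\ dot n s3 = 0.

(* det of the Gram matrix [[1,u,v],[u,1,w],[v,w,1]] *)
Definition detG (u v w : R) : R := 1 + 2 * u * v * w - (u ^ 2 + v ^ 2 + w ^ 2).

(* coordinate vectors (w,v,u) of the four Ising Gram matrices *)
Definition Eising0 : vec3 := (1, 1, 1).
Definition Eising1 : vec3 := (1, -1, -1).
Definition Eising2 : vec3 := (-1, 1, -1).
Definition Eising3 : vec3 := (-1, -1, 1).

Definition ising_condition (J E : vec3) : Prop := dot J E <= - vnorm J.

Definition u_formula (J1 J2 J3 : R) : R :=
  J1 / (2 * J2) * (J2 ^ 2 / J3 ^ 2 - 1) - J2 / (2 * J1).
Definition v_formula (J1 J2 J3 : R) : R :=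
  J1 / (2 * J3) * (J3 ^ 2 / J2 ^ 2 - 1) - J3 / (2 * J1).
Definition w_formula (J1 J2 J3 : R) : R :=
  J2 / (2 * J3) * (J3 ^ 2 / J1 ^ 2 - 1) - J3 / (2 * J2).
Definition mu_formula (J1 J2 J3 : R) : R :=
  - 2 * J1 ^ 3 * J2 ^ 3 * J3 ^ 3 /
  (J1 ^ 4 * (J2 ^ 2 - J3 ^ 2) ^ 2 - 2 * J1 ^ 2 * J2 ^ 2 * J3 ^ 2 * (J2 ^ 2 + J3 ^ 2)
   + J2 ^ 4 * J3 ^ 4).

From Stdlib Require Import Reals Lra Psatz.
Open Scope R_scope.

(** For unit spins, expanding the square of
    [V = J2 J3 s1 + J3 J1 s2 + J1 J2 s3] gives
    [|V|^2 = (J2 J3)^2 + (J3 J1)^2 + (J1 J2)^2 + 2 J1 J2 J3 H(s)].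
    The four non-Ising conditions force [J1 J2 J3 > 0] and the strict triangle
    inequalities between [|J2 J3|], [|J3 J1|], [|J1 J2|] (positivity of Heron's
    term).  Hence [H] is minimal exactly when [V = 0], a closed triangle of unit
    vectors with these weights exists, and the law of cosines determines
    [u, v, w]; the ground states are therefore coplanar and non-collinear. *)

Definition lincomb (x y z : R) (a b c : vec3) : vec3 :=
  let '(a1, a2, a3) := a in let '(b1, b2, b3) := b in let '(c1, c2, c3) := c in
  (x * a1 + y * b1 + z * c1, x * a2 + y * b2 + z * c2, x * a3 + y * b3 + z * c3).

Definition cross (a b : vec3) : vec3 :=
  let '(a1, a2, a3) := a in let '(b1, b2, b3) := b in
  (a2 * b3 - a3 * b2, a3 * b1 - a1 * b3, a1 * b2 - a2 * b1).

Ltac vec3_ring :=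
  repeat match goal with v : vec3 |- _ => destruct v as [[? ?] ?] end; simpl; ring.

Lemma dot_comm (a b : vec3) : dot a b = dot b a.
Proof. vec3_ring. Qed.

Lemma dot_0_l (a : vec3) : dot (0, 0, 0) a = 0.
Proof. vec3_ring. Qed.

Lemma dot_lincomb_l (x y z : R) (a b c t : vec3) :
  dot (lincomb x y z a b c) t = x * dot a t + y * dot b t + z * dot c t.
Proof. vec3_ring. Qed.

Lemma dot_lincomb_self (x y z : R) (a b c : vec3) :
  dot (lincomb x y z a b c) (lincomb x y z a b c) =
  x ^ 2 * dot a a + y ^ 2 * dot b b + z ^ 2 * dot c c
  + 2 * x * y * dot a b + 2 * x * z * dot a c + 2 * y * z * dot b c.
Proof. vec3_ring. Qed.

Lemma dot_self_ge0 (a : vec3) : 0 <= dot a a.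
Proof. destruct a as [[a1 a2] a3]; simpl; nra. Qed.

Lemma dot_self_eq0 (a : vec3) : dot a a = 0 -> a = (0, 0, 0).
Proof.
  destruct a as [[a1 a2] a3]; simpl; intro h.
  assert (a1 = 0) by nra; assert (a2 = 0) by nra; assert (a3 = 0) by nra.
  now subst.
Qed.

Lemma dot_cross_l (a b : vec3) : dot (cross a b) a = 0.
Proof. vec3_ring. Qed.

Lemma dot_cross_r (a b : vec3) : dot (cross a b) b = 0.
Proof. vec3_ring. Qed.

Lemma dot_cross_self (a b : vec3) :
  dot (cross a b) (cross a b) = dot a a * dot b b - dot a b ^ 2.
Proof. vec3_ring. Qed.

Definition cosine (x y z : R) : R := (z ^ 2 - x ^ 2 - y ^ 2) / (2 * x * y).

Definition heron (x y z : R) : R :=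
  (x + y + z) * (- x + y + z) * (x - y + z) * (x + y - z).

Lemma heron_perm132 (x y z : R) : heron x z y = heron x y z.
Proof. unfold heron; ring. Qed.

Lemma heron_perm231 (x y z : R) : heron y z x = heron x y z.
Proof. unfold heron; ring. Qed.

Lemma one_sub_cosine_sq (x y z : R) : x <> 0 -> y <> 0 ->
  1 - cosine x y z ^ 2 = heron x y z / (4 * x ^ 2 * y ^ 2).
Proof. intros hx hy; unfold cosine, heron; field; auto. Qed.

Lemma cosine_bounds (x y z : R) : x <> 0 -> y <> 0 -> 0 < heron x y z ->
  -1 < cosine x y z < 1.
Proof.
  intros hx hy hK.
  assert (0 < 1 - cosine x y z ^ 2).
  { rewrite one_sub_cosine_sq by auto.
    apply Rdiv_lt_0_compat; [exact hK |].
    pose proof (Rsqr_pos_lt (x * y) (Rmult_integral_contrapositive_currified x y hx hy)).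
    unfold Rsqr in *; nra. }
  split; nra.
Qed.

Lemma detG_cosine (x y z : R) : x <> 0 -> y <> 0 -> z <> 0 ->
  detG (cosine x y z) (cosine x z y) (cosine y z x) = 0.
Proof. intros; unfold detG, cosine; field; auto. Qed.

Lemma closed_triangle_exists (x y z : R) :
  x <> 0 -> y <> 0 -> z <> 0 -> 0 < heron x y z ->
  exists s1 s2 s3, unit_vec s1 /\ unit_vec s2 /\ unit_vec s3 /\
    lincomb x y z s1 s2 s3 = (0, 0, 0).
Proof.
  intros hx hy hz hK.
  set (c := cosine x y z).
  assert (hc : -1 < c < 1) by (apply cosine_bounds; auto).
  set (r := sqrt (1 - c ^ 2)).
  assert (hr : r * r = 1 - c ^ 2) by (apply sqrt_sqrt; nra).
  assert (h2c : 2 * x * y * c = z ^ 2 - x ^ 2 - y ^ 2) by (unfold c, cosine; field; auto).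
  exists (1, 0, 0), (c, r, 0), (- (x + y * c) / z, - (y * r) / z, 0).
  unfold unit_vec, lincomb, dot; repeat split.
  - ring.
  - nra.
  - field_simplify_eq; auto; nra.
  - f_equal; [f_equal |]; field; auto.
Qed.

Section ClosedTriangle.

Variables (x y z : R) (s1 s2 s3 : vec3).
Hypotheses (hx : x <> 0) (hy : y <> 0) (hz : z <> 0).
Hypotheses (hs1 : unit_vec s1) (hs2 : unit_vec s2) (hs3 : unit_vec s3).
Hypothesis closed : lincomb x y z s1 s2 s3 = (0, 0, 0).

Lemma cosine_law :
  dot s1 s2 = cosine x y z /\ dot s1 s3 = cosine x z y /\ dot s2 s3 = cosine y z x.
Proof.
  assert (orth : forall t, x * dot s1 t + y * dot s2 t + z * dot s3 t = 0).
  { intro t; now rewrite <- dot_lincomb_l, closed, dot_0_l. }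
  pose proof (orth s1) as o1; pose proof (orth s2) as o2; pose proof (orth s3) as o3.
  unfold unit_vec in *.
  rewrite (dot_comm s2 s1), (dot_comm s3 s1), hs1 in o1.
  rewrite (dot_comm s3 s2), hs2 in o2.
  rewrite hs3 in o3.
  unfold cosine; repeat split; field_simplify_eq; auto; nra.
Qed.

Lemma coplanar_of_closed : dot s1 s2 ^ 2 < 1 -> coplanar s1 s2 s3.
Proof.
  intro hu; exists (cross s1 s2); repeat split.
  - intro h0; pose proof (dot_cross_self s1 s2) as hn.
    rewrite h0, dot_0_l, hs1, hs2 in hn; lra.
  - apply dot_cross_l.
  - apply dot_cross_r.
  - apply (Rmult_eq_reg_l z); [| exact hz].
    pose proof (dot_lincomb_l x y z s1 s2 s3 (cross s1 s2)) as e.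
    rewrite closed, dot_0_l, !(dot_comm _ (cross s1 s2)), dot_cross_l, dot_cross_r in e.
    lra.
Qed.

End ClosedTriangle.

Definition spin_sum (J1 J2 J3 : R) (s1 s2 s3 : vec3) : vec3 :=
  lincomb (J2 * J3) (J3 * J1) (J1 * J2) s1 s2 s3.

Lemma spin_sum_sq (J1 J2 J3 : R) (s1 s2 s3 : vec3) :
  unit_vec s1 -> unit_vec s2 -> unit_vec s3 ->
  dot (spin_sum J1 J2 J3 s1 s2 s3) (spin_sum J1 J2 J3 s1 s2 s3)
  = (J2 * J3) ^ 2 + (J3 * J1) ^ 2 + (J1 * J2) ^ 2
    + 2 * (J1 * J2 * J3) * energy (J1, J2, J3) s1 s2 s3.
Proof.
  unfold unit_vec, spin_sum, energy; intros h1 h2 h3.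
  rewrite dot_lincomb_self, h1, h2, h3, (dot_comm s3 s1); ring.
Qed.

Lemma energy_gap (J1 J2 J3 : R) (t1 t2 t3 s1 s2 s3 : vec3) :
  unit_vec t1 -> unit_vec t2 -> unit_vec t3 -> spin_sum J1 J2 J3 t1 t2 t3 = (0, 0, 0) ->
  unit_vec s1 -> unit_vec s2 -> unit_vec s3 ->
  2 * (J1 * J2 * J3) * (energy (J1, J2, J3) s1 s2 s3 - energy (J1, J2, J3) t1 t2 t3)
  = dot (spin_sum J1 J2 J3 s1 s2 s3) (spin_sum J1 J2 J3 s1 s2 s3).
Proof.
  intros ht1 ht2 ht3 ht hs1 hs2 hs3.
  pose proof (spin_sum_sq J1 J2 J3 t1 t2 t3 ht1 ht2 ht3) as et.
  rewrite ht, dot_0_l in et.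
  rewrite (spin_sum_sq J1 J2 J3 s1 s2 s3 hs1 hs2 hs3); lra.
Qed.

Lemma ground_state_iff (J1 J2 J3 : R) (t1 t2 t3 s1 s2 s3 : vec3) :
  0 < J1 * J2 * J3 -> unit_vec t1 -> unit_vec t2 -> unit_vec t3 ->
  spin_sum J1 J2 J3 t1 t2 t3 = (0, 0, 0) ->
  ground_state (J1, J2, J3) s1 s2 s3 <->
  unit_vec s1 /\ unit_vec s2 /\ unit_vec s3 /\ spin_sum J1 J2 J3 s1 s2 s3 = (0, 0, 0).
Proof.
  intros hP ht1 ht2 ht3 ht.
  split.
  - intros (hs1 & hs2 & hs3 & hmin); repeat split; auto.
    apply dot_self_eq0.
    pose proof (hmin t1 t2 t3 ht1 ht2 ht3).
    pose proof (energy_gap J1 J2 J3 t1 t2 t3 s1 s2 s3 ht1 ht2 ht3 ht hs1 hs2 hs3).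
    pose proof (dot_self_ge0 (spin_sum J1 J2 J3 s1 s2 s3)).
    nra.
  - intros (hs1 & hs2 & hs3 & hs); repeat split; auto.
    intros r1 r2 r3 hr1 hr2 hr3.
    pose proof (energy_gap J1 J2 J3 t1 t2 t3 s1 s2 s3 ht1 ht2 ht3 ht hs1 hs2 hs3) as es.
    pose proof (energy_gap J1 J2 J3 t1 t2 t3 r1 r2 r3 ht1 ht2 ht3 ht hr1 hr2 hr3).
    pose proof (dot_self_ge0 (spin_sum J1 J2 J3 r1 r2 r3)).
    rewrite hs, dot_0_l in es.
    nra.
Qed.

(* [~ ising_condition (a, b, c) Eising0] amounts to this, since
   [(a + b + c)^2 < a^2 + b^2 + c^2] iff [a b + b c + c a < 0]; the other
   [Eising i] negate two of the couplings. *)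
Definition frustrated (a b c : R) : Prop := 0 < a + b + c \/ a * b + b * c + c * a < 0.

Lemma frustrated_of_not_ising (J1 J2 J3 e1 e2 e3 a b c : R) :
  e1 ^ 2 = 1 -> e2 ^ 2 = 1 -> e3 ^ 2 = 1 -> a = e1 * J1 -> b = e2 * J2 -> c = e3 * J3 ->
  ~ ising_condition (J1, J2, J3) (e1, e2, e3) -> frustrated a b c.
Proof.
  unfold ising_condition, vnorm, dot, frustrated; intros h1 h2 h3 -> -> -> hnot.
  apply Rnot_le_lt in hnot.
  set (S := J1 * J1 + J2 * J2 + J3 * J3) in hnot.
  assert (hS : 0 <= S) by (unfold S; nra).
  destruct (Rlt_or_le 0 (J1 * e1 + J2 * e2 + J3 * e3)); [left; lra | right].
  pose proof (sqrt_sqrt S hS); pose proof (sqrt_pos S).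
  assert (hsq : (J1 * e1 + J2 * e2 + J3 * e3) ^ 2 < S) by nra.
  unfold S in hsq; nra.
Qed.

Lemma frustrated_of_not_ising_all (J1 J2 J3 : R) :
  ~ ising_condition (J1, J2, J3) Eising0 -> ~ ising_condition (J1, J2, J3) Eising1 ->
  ~ ising_condition (J1, J2, J3) Eising2 -> ~ ising_condition (J1, J2, J3) Eising3 ->
  frustrated J1 J2 J3 /\ frustrated J1 (- J2) (- J3) /\
  frustrated (- J1) J2 (- J3) /\ frustrated (- J1) (- J2) J3.
Proof.
  intros h0 h1 h2 h3; repeat split;
    [ apply (frustrated_of_not_ising J1 J2 J3 1 1 1)
    | apply (frustrated_of_not_ising J1 J2 J3 1 (-1) (-1))
    | apply (frustrated_of_not_ising J1 J2 J3 (-1) 1 (-1))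
    | apply (frustrated_of_not_ising J1 J2 J3 (-1) (-1) 1) ];
    auto; ring.
Qed.

Lemma not_frustrated_nonpos (a b c : R) : a <= 0 -> b <= 0 -> c <= 0 -> ~ frustrated a b c.
Proof. unfold frustrated; intros ha hb hc [h | h]; nra. Qed.

Lemma heron_pos_of_frustrated (a b c : R) : 0 < a -> 0 < b -> 0 < c ->
  frustrated a (- b) (- c) -> frustrated (- a) b (- c) -> frustrated (- a) (- b) c ->
  0 < heron (b * c) (c * a) (a * b).
Proof.
  unfold frustrated, heron; intros ha hb hc h1 h2 h3.
  assert (0 < b * c) by nra; assert (0 < c * a) by nra; assert (0 < a * b) by nra.
  assert (b * c < c * a + a * b) by (destruct h1; nra).
  assert (c * a < a * b + b * c) by (destruct h2; nra).
  assert (a * b < b * c + c * a) by (destruct h3; nra).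
  repeat apply Rmult_lt_0_compat; lra.
Qed.

Section Frustrated.

Variables a b c : R.
Hypotheses (H0 : frustrated a b c) (H1 : frustrated a (- b) (- c))
  (H2 : frustrated (- a) b (- c)) (H3 : frustrated (- a) (- b) c).

(* If [a b c <= 0], negating two of [a, b, c] makes all three nonpositive. *)
Lemma frustrated_prod_pos : 0 < a * b * c.
Proof.
  destruct (Rtotal_order a 0) as [ha | [ha | ha]];
  destruct (Rtotal_order b 0) as [hb | [hb | hb]];
  destruct (Rtotal_order c 0) as [hc | [hc | hc]];
  first
    [ assert (0 < a * b) by nra; nra
    | assert (a * b < 0) by nra; nra
    | exfalso; apply (not_frustrated_nonpos a b c); auto; lra
    | exfalso; apply (not_frustrated_nonpos a (- b) (- c)); auto; lra
    | exfalso; apply (not_frustrated_nonpos (- a) b (- c)); auto; lra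
    | exfalso; apply (not_frustrated_nonpos (- a) (- b) c); auto; lra ].
Qed.

(* Negating two of [a, b, c] permutes the hypotheses and preserves the Heron
   term, which reduces every sign pattern with [a b c > 0] to [a, b, c > 0]. *)
Lemma frustrated_heron_pos : 0 < heron (b * c) (c * a) (a * b).
Proof.
  pose proof frustrated_prod_pos as hP.
  assert (ha : a <> 0) by (intro e; rewrite e in hP; lra).
  assert (hb : b <> 0) by (intro e; rewrite e in hP; lra).
  destruct (Rlt_or_le 0 a), (Rlt_or_le 0 b).
  - assert (0 < a * b) by nra.
    apply heron_pos_of_frustrated; auto; nra.
  - assert (a * b < 0) by nra.
    replace (heron (b * c) (c * a) (a * b)) with (heron (- b * - c) (- c * a) (a * - b))
      by (unfold heron; ring).
    apply heron_pos_of_frustrated; rewrite ?Ropp_involutive; auto; nra.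
  - assert (a * b < 0) by nra.
    replace (heron (b * c) (c * a) (a * b)) with (heron (b * - c) (- c * - a) (- a * b))
      by (unfold heron; ring).
    apply heron_pos_of_frustrated; rewrite ?Ropp_involutive; auto; nra.
  - assert (0 < a * b) by nra.
    replace (heron (b * c) (c * a) (a * b)) with (heron (- b * c) (c * - a) (- a * - b))
      by (unfold heron; ring).
    apply heron_pos_of_frustrated; rewrite ?Ropp_involutive; auto; nra.
Qed.

End Frustrated.

Section GroundStates.

Variables J1 J2 J3 : R.
Hypotheses (hP : 0 < J1 * J2 * J3) (hK : 0 < heron (J2 * J3) (J3 * J1) (J1 * J2)).

Lemma couplings_neq0 : J1 <> 0 /\ J2 <> 0 /\ J3 <> 0.
Proof. repeat split; intro e; rewrite e in hP; lra. Qed.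

Lemma couplings_products_neq0 : J2 * J3 <> 0 /\ J3 * J1 <> 0 /\ J1 * J2 <> 0.
Proof.
  destruct couplings_neq0 as (n1 & n2 & n3).
  repeat split; apply Rmult_integral_contrapositive_currified; auto.
Qed.

Lemma u_formula_cosine : u_formula J1 J2 J3 = cosine (J2 * J3) (J3 * J1) (J1 * J2).
Proof.
  destruct couplings_neq0 as (n1 & n2 & n3); unfold u_formula, cosine; field; auto.
Qed.

Lemma v_formula_cosine : v_formula J1 J2 J3 = cosine (J2 * J3) (J1 * J2) (J3 * J1).
Proof.
  destruct couplings_neq0 as (n1 & n2 & n3); unfold v_formula, cosine; field; auto.
Qed.

Lemma w_formula_cosine : w_formula J1 J2 J3 = cosine (J3 * J1) (J1 * J2) (J2 * J3).
Proof.
  destruct couplings_neq0 as (n1 & n2 & n3); unfold w_formula, cosine; field; auto.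
Qed.

Lemma formulas_bounds :
  (-1 < u_formula J1 J2 J3 < 1) /\ (-1 < v_formula J1 J2 J3 < 1) /\
  (-1 < w_formula J1 J2 J3 < 1).
Proof.
  destruct couplings_products_neq0 as (n23 & n31 & n12).
  rewrite u_formula_cosine, v_formula_cosine, w_formula_cosine.
  split; [| split]; apply cosine_bounds; auto.
  - now rewrite heron_perm132.
  - now rewrite heron_perm231.
Qed.

Lemma detG_formulas :
  detG (u_formula J1 J2 J3) (v_formula J1 J2 J3) (w_formula J1 J2 J3) = 0.
Proof.
  destruct couplings_products_neq0 as (n23 & n31 & n12).
  rewrite u_formula_cosine, v_formula_cosine, w_formula_cosine.
  now apply detG_cosine.
Qed.

(* The denominator of [mu_formula] is minus the Heron term. *)
Lemma mu_formula_gradient :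
  J1 = 2 * mu_formula J1 J2 J3 * (u_formula J1 J2 J3 * v_formula J1 J2 J3 - w_formula J1 J2 J3)
  /\ J2 = 2 * mu_formula J1 J2 J3 * (w_formula J1 J2 J3 * u_formula J1 J2 J3 - v_formula J1 J2 J3)
  /\ J3 = 2 * mu_formula J1 J2 J3 * (v_formula J1 J2 J3 * w_formula J1 J2 J3 - u_formula J1 J2 J3).
Proof.
  destruct couplings_neq0 as (n1 & n2 & n3).
  unfold mu_formula, u_formula, v_formula, w_formula.
  repeat split; field; repeat split; auto;
    intro e; unfold heron in hK; lra.
Qed.

Lemma ground_state_spin_sum (s1 s2 s3 : vec3) :
  ground_state (J1, J2, J3) s1 s2 s3 <->
  unit_vec s1 /\ unit_vec s2 /\ unit_vec s3 /\ spin_sum J1 J2 J3 s1 s2 s3 = (0, 0, 0).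
Proof.
  destruct couplings_products_neq0 as (n23 & n31 & n12).
  destruct (closed_triangle_exists (J2 * J3) (J3 * J1) (J1 * J2) n23 n31 n12 hK)
    as (t1 & t2 & t3 & ht1 & ht2 & ht3 & ht).
  exact (ground_state_iff J1 J2 J3 t1 t2 t3 s1 s2 s3 hP ht1 ht2 ht3 ht).
Qed.

Lemma ground_state_exists : exists s1 s2 s3, ground_state (J1, J2, J3) s1 s2 s3.
Proof.
  destruct couplings_products_neq0 as (n23 & n31 & n12).
  destruct (closed_triangle_exists (J2 * J3) (J3 * J1) (J1 * J2) n23 n31 n12 hK)
    as (t1 & t2 & t3 & ht).
  exists t1, t2, t3; now apply ground_state_spin_sum.
Qed.

Section GroundState.

Variables s1 s2 s3 : vec3.
Hypothesis hs : ground_state (J1, J2, J3) s1 s2 s3.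

Lemma ground_state_dots :
  dot s1 s2 = u_formula J1 J2 J3 /\ dot s1 s3 = v_formula J1 J2 J3 /\
  dot s2 s3 = w_formula J1 J2 J3.
Proof.
  destruct couplings_products_neq0 as (n23 & n31 & n12).
  apply ground_state_spin_sum in hs as (hs1 & hs2 & hs3 & hV).
  rewrite u_formula_cosine, v_formula_cosine, w_formula_cosine.
  now apply cosine_law.
Qed.

Lemma ground_state_coplanar : coplanar s1 s2 s3.
Proof.
  destruct couplings_products_neq0 as (n23 & n31 & n12).
  destruct ground_state_dots as (hu & _), formulas_bounds as (bu & _).
  apply ground_state_spin_sum in hs as (hs1 & hs2 & hs3 & hV).
  apply (coplanar_of_closed (J2 * J3) (J3 * J1) (J1 * J2)); auto.
  rewrite hu; nra.
Qed.

Lemma ground_state_energy :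
  energy (J1, J2, J3) s1 s2 s3
  = J1 * w_formula J1 J2 J3 + J2 * v_formula J1 J2 J3 + J3 * u_formula J1 J2 J3.
Proof.
  destruct ground_state_dots as (hu & hv & hw).
  unfold energy; rewrite (dot_comm s3 s1), hu, hv, hw; ring.
Qed.

End GroundState.

End GroundStates.

Theorem mainTheorem2 (J1 J2 J3 : R) :
  ~ ising_condition (J1, J2, J3) Eising0 ->
  ~ ising_condition (J1, J2, J3) Eising1 ->
  ~ ising_condition (J1, J2, J3) Eising2 ->
  ~ ising_condition (J1, J2, J3) Eising3 ->
  (exists s1 s2 s3 : vec3, ground_state (J1, J2, J3) s1 s2 s3) /\
  forall s1 s2 s3 : vec3, ground_state (J1, J2, J3) s1 s2 s3 ->
    let u := dot s1 s2 in
    let v := dot s1 s3 in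
    let w := dot s2 s3 in
    coplanar s1 s2 s3 /\
    detG u v w = 0 /\
    (-1 < u < 1) /\ (-1 < v < 1) /\ (-1 < w < 1) /\
    (exists mu : R,
        J1 = 2 * mu * (u * v - w) /\
        J2 = 2 * mu * (w * u - v) /\
        J3 = 2 * mu * (v * w - u) /\
        mu = mu_formula J1 J2 J3) /\
    u = u_formula J1 J2 J3 /\
    v = v_formula J1 J2 J3 /\
    w = w_formula J1 J2 J3 /\
    energy (J1, J2, J3) s1 s2 s3
      = J1 * w_formula J1 J2 J3 + J2 * v_formula J1 J2 J3 + J3 * u_formula J1 J2 J3.
Proof.
  intros h0 h1 h2 h3.
  destruct (frustrated_of_not_ising_all J1 J2 J3 h0 h1 h2 h3) as (f0 & f1 & f2 & f3).
  pose proof (frustrated_prod_pos J1 J2 J3 f0 f1 f2 f3) as hP.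
  pose proof (frustrated_heron_pos J1 J2 J3 f0 f1 f2 f3) as hK.
  split; [exact (ground_state_exists J1 J2 J3 hP hK) |].
  intros s1 s2 s3 hs u v w.
  destruct (ground_state_dots J1 J2 J3 hP hK s1 s2 s3 hs) as (hu & hv & hw).
  destruct (formulas_bounds J1 J2 J3 hP hK) as ((? & ?) & (? & ?) & (? & ?)).
  destruct (mu_formula_gradient J1 J2 J3 hP hK) as (g1 & g2 & g3).
  unfold u, v, w; rewrite hu, hv, hw.
  repeat split; auto.
  - exact (ground_state_coplanar J1 J2 J3 hP hK s1 s2 s3 hs).
  - exact (detG_formulas J1 J2 J3 hP).
  - now exists (mu_formula J1 J2 J3).
  - exact (ground_state_energy J1 J2 J3 hP hK s1 s2 s3 hs).
Qed.
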